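(* Let $M$ be an $N\times N$ and $N_0$ an $r\times N$ complex matrix. Then $I-\widetilde M$ is invertible, and if the series $\sum_{m=0}^\infty N_0M^m$ converges, then $\sum_{m=0}^\infty N_0M^m=N_0(I-\widetilde M)^{-1}$.
   Context: For a square complex matrix $M$ with Jordan decomposition $M=SJS^{-1}$, where $S$ is nonsingular and $J=\mathrm{diag}(J_{n_1}(\lambda_1),\dots,J_{n_k}(\lambda_k))$ with $J_{n_i}(\lambda_i)$ the $n_i\times n_i$ Jordan block for eigenvalue $\lambda_i$, define $\widetilde M=S\widetilde JS^{-1}$, where $\widetilde J=\mathrm{diag}(J^1,\dots,J^k)$ with $J^i=0_{n_i\times n_i}$ if $|\lambda_i|\ge1$ and $J^i=J_{n_i}(\lambda_i)$ otherwise. $I$ is the identity matrix. *)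

From HB Require Import structures.
From mathcomp Require Import all_boot all_order all_algebra.
Set Implicit Arguments. Unset Strict Implicit. Unset Printing Implicit Defensive.
Import Order.TTheory GRing.Theory Num.Theory.
Local Open Scope ring_scope.

Definition jordan_block (C : numClosedFieldType) (n : nat) (lam : C) : 'M[C]_n :=
  \matrix_(i < n, j < n) (lam *+ (i == j :> nat) + (j == i.+1 :> nat)%:R).

Definition jordan_mx (C : numClosedFieldType) (k : nat) (ns : 'I_k -> nat)
  (lam : 'I_k -> C) : 'M[C]_(\sum_i ns i) :=
  @mxdiag C k ns (fun i => jordan_block (ns i) (lam i)).

Definition jordan_tilde_mx (C : numClosedFieldType) (k : nat) (ns : 'I_k -> nat)
  (lam : 'I_k -> C) : 'M[C]_(\sum_i ns i) :=
  @mxdiag C k ns (fun i => if 1 <= `|lam i| then 0 else jordan_block (ns i) (lam i)).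

Definition mx_series_to (C : numClosedFieldType) (p q : nat)
  (F : nat -> 'M[C]_(p, q)) (L : 'M[C]_(p, q)) : Prop :=
  forall eps : C, 0 < eps -> exists K : nat, forall n : nat, (K <= n)%N ->
    forall i j, `|(\sum_(m < n) F m) i j - L i j| < eps.

From HB Require Import structures.
From mathcomp Require Import all_boot all_order all_algebra zify.
Import Order.TTheory GRing.Theory Num.Theory.
Set Implicit Arguments. Unset Strict Implicit. Unset Printing Implicit Defensive.
Local Open Scope ring_scope.

(* Let M = S J S^-1 be a Jordan decomposition and M~ = S J~ S^-1, where J~
   zeroes the Jordan blocks with |lam_i| >= 1.  The proof has two halves.

   - Invertibility: 1 - M~ = S (1 - J~) S^-1, and 1 - J~ is block diagonal
     with blocks 1 or 1 - J_n(lam), |lam| < 1; the latter is upper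
     triangular with diagonal 1 - lam <> 0.
   - Sum: if sum N0 M^m converges, its terms tend to 0, hence so does
     P J^m with P = N0 S.  Blockwise, P_i J_n(lam_i)^m -> 0 forces P_i = 0
     when |lam_i| >= 1 (induction on the columns of P_i), so P J^m = P J~^m
     and N0 M^m = N0 M~^m.  The series is thus geometric with ratio M~, and
     a convergent geometric series sum P A^m with 1 - A invertible sums to
     P (1 - A)^-1 by telescoping. *)

Section UpperTriangular.
Variable R : pzSemiRingType.

Definition upper_trig n (A : 'M[R]_n) : Prop :=
  forall i j : 'I_n, (j < i)%N -> A i j = 0.

Lemma upper_trig_mul n (A B : 'M[R]_n) :
  upper_trig A -> upper_trig B -> upper_trig (A *m B).
Proof.
move=> uA uB i j ji; rewrite mxE big1 // => c _.
by case: (ltnP c i) => [/uA -> | ic]; rewrite ?mul0r // uB ?mulr0 //; lia.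
Qed.

Lemma upper_trig_mul_diag n (A B : 'M[R]_n) i :
  upper_trig A -> upper_trig B -> (A *m B) i i = A i i * B i i.
Proof.
move=> uA uB; rewrite mxE (bigD1 i) //= big1 ?addr0 // => c; rewrite -val_eqE /= => ci.
by case: (ltnP c i) => [/uA -> | ic]; rewrite ?mul0r // uB ?mulr0 //; lia.
Qed.

Lemma upper_trig_exp n (A : 'M[R]_n) m : upper_trig A -> upper_trig (A ^+ m).
Proof.
move=> uA; elim: m => [|m uAm]; first last.
  by rewrite exprSr -mulmxE; apply: upper_trig_mul.
move=> i j ji; rewrite expr0 mxE.
by case: eqP => // ij; move: ji; rewrite ij ltnn.
Qed.

Lemma upper_trig_exp_diag n (A : 'M[R]_n) m i :
  upper_trig A -> (A ^+ m) i i = A i i ^+ m.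
Proof.
move=> uA; elim: m => [|m IHm]; first by rewrite expr0 mxE eqxx.
by rewrite exprSr -mulmxE upper_trig_mul_diag ?IHm ?exprSr //; apply: upper_trig_exp.
Qed.

End UpperTriangular.

(* The library computes determinants of lower triangular matrices; transpose. *)
Lemma det_upper_trig (R : comPzRingType) n (A : 'M[R]_n) :
  upper_trig A -> \det A = \prod_i A i i.
Proof.
move=> uA; rewrite -det_tr det_trig; first by apply: eq_bigr => i _; rewrite mxE.
by apply/is_trig_mxP => i j ij; rewrite mxE uA.
Qed.

Section NullSequences.
Variable C : numClosedFieldType.

Definition mx_null p q (F : nat -> 'M[C]_(p, q)) : Prop :=
  forall eps : C, 0 < eps -> exists K : nat, forall n : nat, (K <= n)%N ->
    forall i j, `|F n i j| < eps.

Lemma mx_null_ext p q (F G : nat -> 'M[C]_(p, q)) :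
  (forall n, F n = G n) -> mx_null F -> mx_null G.
Proof. by move=> eFG nF eps /nF [K HK]; exists K => n /HK; rewrite eFG. Qed.

Lemma mx_null_add p q (F G : nat -> 'M[C]_(p, q)) :
  mx_null F -> mx_null G -> mx_null (fun n => F n + G n).
Proof.
move=> nF nG eps eps_gt0.
have eps2_gt0 : 0 < eps / 2 by rewrite divr_gt0 // ltr0n.
have [[KF HKF] [KG HKG]] := (nF _ eps2_gt0, nG _ eps2_gt0).
exists (maxn KF KG) => n; rewrite geq_max => /andP[nF_le nG_le] i j.
rewrite mxE (splitr eps); apply: le_lt_trans (ler_normD _ _) _.
by apply: ltrD; [apply: HKF | apply: HKG].
Qed.

Lemma mx_null_shift p q (F : nat -> 'M[C]_(p, q)) :
  mx_null F -> mx_null (fun n => F n.+1).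
Proof. by move=> nF eps /nF [K HK]; exists K => n Kn; apply/HK/leqW. Qed.

Lemma mx_null_opp p q (F : nat -> 'M[C]_(p, q)) :
  mx_null F -> mx_null (fun n => - F n).
Proof. by move=> nF eps /nF [K HK]; exists K => n /HK Kn i j; rewrite mxE normrN. Qed.

Lemma mx_null_bounded_below p q (F : nat -> 'M[C]_(p, q)) i j (x : C) :
  mx_null F -> (forall n, `|x| <= `|F n i j|) -> x = 0.
Proof.
move=> nF bound; apply/eqP; apply: contraT; rewrite -normr_gt0 => /nF [K HK].
by have := le_lt_trans (bound K) (HK K (leqnn K) i j); rewrite ltxx.
Qed.

Lemma mx_null_const p q (X : 'M[C]_(p, q)) : mx_null (fun _ => X) -> X = 0.
Proof.
by move=> nX; apply/matrixP => i j; rewrite mxE; apply: (mx_null_bounded_below nX).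
Qed.

(* Right multiplication by a fixed matrix B scales the entries by at most
   the sum of the moduli of the entries of B. *)
Lemma mx_null_mulmxr p q s (F : nat -> 'M[C]_(p, q)) (B : 'M[C]_(q, s)) :
  mx_null F -> mx_null (fun n => F n *m B).
Proof.
move=> nF eps eps_gt0.
pose c := \sum_k \sum_j `|B k j|.
have c_ge0 : 0 <= c by do 2!apply: sumr_ge0 => ? _.
have c1_gt0 : 0 < c + 1 by apply: ltr_wpDl.
have [K HK] := nF _ (divr_gt0 eps_gt0 c1_gt0).
exists K => n Kn i j; rewrite mxE; apply: le_lt_trans (ler_norm_sum _ _ _) _.
apply: (@le_lt_trans _ _ (eps / (c + 1) * c)).
  rewrite /c mulr_sumr; apply: ler_sum => k _; rewrite normrM.
  apply: ler_pM; rewrite ?normr_ge0 //; first exact: ltW (HK n Kn i k).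
  by rewrite (bigD1 j) //= lerDl; apply: sumr_ge0.
by rewrite mulrAC ltr_pdivrMr // ltr_pM2l // ltrDl ltr01.
Qed.

Lemma mx_null_submxrow k (ns : 'I_k -> nat) p (F : nat -> 'M[C]_(p, \sum_i ns i)) i :
  mx_null F -> mx_null (fun n => submxrow (F n) i).
Proof. by move=> nF eps /nF [K HK]; exists K => n /HK Kn a b; rewrite mxE. Qed.

Lemma series_partial_null p q (F : nat -> 'M[C]_(p, q)) L :
  mx_series_to F L -> mx_null (fun n => \sum_(m < n) F m - L).
Proof. by move=> sF eps /sF [K HK]; exists K => n /HK Kn i j; rewrite !mxE. Qed.

Lemma series_terms_null p q (F : nat -> 'M[C]_(p, q)) L :
  mx_series_to F L -> mx_null F.
Proof.
move=> /series_partial_null nS.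
apply: mx_null_ext (mx_null_add (mx_null_shift nS) (mx_null_opp nS)) => n.
by rewrite big_ord_recr /= opprB addrA subrK addrAC subrr add0r.
Qed.

Lemma mx_series_to_ext p q (F G : nat -> 'M[C]_(p, q)) L :
  (forall m, F m = G m) -> mx_series_to F L -> mx_series_to G L.
Proof.
move=> eFG sF eps /sF [K HK]; exists K => n /HK Kn i j.
by under eq_bigr do rewrite -eFG.
Qed.

End NullSequences.

Section MatrixAlgebra.
Variable R : comUnitRingType.

Lemma geometric_telescope r n (P : 'M[R]_(r, n)) (A : 'M[R]_n) k :
  (\sum_(m < k) P *m A ^+ m) *m (1%:M - A) = P - P *m A ^+ k.
Proof.
elim: k => [|k IHk]; first by rewrite big_ord0 mul0mx expr0 mulmx1 subrr.
rewrite big_ord_recr /= mulmxDl IHk mulmxBr mulmx1 exprSr -mulmxE mulmxA.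
by rewrite addrA subrK.
Qed.

Lemma conj_mx_exp n (S A : 'M[R]_n) m : S \in unitmx ->
  (S *m A *m invmx S) ^+ m = S *m A ^+ m *m invmx S.
Proof.
move=> unitS; elim: m => [|m IHm]; first by rewrite !expr0 mulmx1 mulmxV.
rewrite exprSr -mulmxE IHm exprSr -mulmxE !mulmxA.
by rewrite -[_ *m invmx S *m S]mulmxA mulVmx // mulmx1.
Qed.

Lemma conj_mx_1_sub n (S A : 'M[R]_n) : S \in unitmx ->
  1%:M - S *m A *m invmx S = S *m (1%:M - A) *m invmx S.
Proof. by move=> unitS; rewrite mulmxBr mulmxBl mulmx1 mulmxV. Qed.

End MatrixAlgebra.

(* The sum of a convergent geometric series P + P A + P A^2 + ... is
   P (1 - A)^-1 whenever 1 - A is invertible: multiplying the partial sums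
   by 1 - A telescopes to P - P A^k, and P A^k -> 0. *)
Lemma geometric_series_limit (C : numClosedFieldType) r n
    (P : 'M[C]_(r, n)) (A : 'M[C]_n) (L : 'M[C]_(r, n)) :
  (1%:M - A) \in unitmx -> mx_series_to (fun m => P *m A ^+ m) L ->
  L = P *m invmx (1%:M - A).
Proof.
move=> unitB sPA.
have : mx_null (fun _ => P - L *m (1%:M - A)).
  have nS := mx_null_mulmxr (1%:M - A) (series_partial_null sPA).
  apply: mx_null_ext (mx_null_add nS (series_terms_null sPA)) => k.
  by rewrite mulmxBl geometric_telescope addrAC subrK.
by move/mx_null_const/eqP; rewrite subr_eq0 => /eqP ->; rewrite mulmxK.
Qed.

Section BlockDiagonal.
Variables (R : comUnitRingType) (k : nat) (ns : 'I_k -> nat).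

Lemma mxdiag_mul (A B : forall i, 'M[R]_(ns i)) :
  mxdiag A *m mxdiag B = mxdiag (fun i => A i *m B i).
Proof.
rewrite {2}/mxdiag mul_mxdiag_mxblock /mxdiag; apply/eq_mxblockP => i j.
by case: eqP => [<- | _]; rewrite ?conform_mx_id ?mulmx0.
Qed.

Lemma mxdiag_exp (A : forall i, 'M[R]_(ns i)) m :
  mxdiag A ^+ m = mxdiag (fun i => A i ^+ m).
Proof.
elim: m => [|m IHm].
  by rewrite expr0; under eq_mxdiag do rewrite expr0; rewrite (mxdiagZ 1).
rewrite exprSr -mulmxE IHm mxdiag_mul; apply/eq_mxdiag => i.
by rewrite exprSr mulmxE.
Qed.

Lemma unitmx_mxdiag (A : forall i, 'M[R]_(ns i)) :
  (forall i, A i \in unitmx) -> mxdiag A \in unitmx.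
Proof.
move=> unitA; have [] // := @mulmx1_unit _ _ (mxdiag A) (mxdiag (fun i => invmx (A i))).
by rewrite mxdiag_mul; under eq_mxdiag do rewrite mulmxV //; apply: mxdiagZ.
Qed.

Lemma mul_mxdiag_blocks r (P : 'M[R]_(r, \sum_i ns i)) (D : forall i, 'M[R]_(ns i)) :
  P *m mxdiag D = \mxrow_i (submxrow P i *m D i).
Proof. by rewrite -{1}(submxrowK P) mul_mxrow_mxdiag. Qed.

End BlockDiagonal.

Section JordanBlock.
Variable C : numClosedFieldType.

Lemma upper_trig_jordan_block n (lam : C) : upper_trig (jordan_block n lam).
Proof.
move=> i j ji; rewrite mxE.
have [-> ->] : (i == j :> nat) = false /\ (j == i.+1 :> nat) = false by split; lia.
by rewrite mulr0n addr0.
Qed.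

Lemma jordan_block_exp_diag n (lam : C) m (i : 'I_n) :
  (jordan_block n lam ^+ m) i i = lam ^+ m.
Proof.
rewrite upper_trig_exp_diag; last exact: upper_trig_jordan_block.
by rewrite mxE eqxx ltn_eqF // mulr1n addr0.
Qed.

(* 1 - J_n(lam) is upper triangular with diagonal 1 - lam, hence
   invertible as soon as lam <> 1. *)
Lemma unitmx_1_sub_jordan_block n (lam : C) :
  lam != 1 -> (1%:M - jordan_block n lam) \in unitmx.
Proof.
move=> lam_neq1; rewrite unitmxE det_upper_trig; last first.
  move=> i j ji; rewrite mxE [X in _ + X]mxE upper_trig_jordan_block // mxE.
  by rewrite -val_eqE /= (gtn_eqF ji) subr0.
rewrite unitfE; apply/prodf_neq0 => i _; rewrite !mxE !eqxx ltn_eqF //.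
by rewrite mulr1n addr0 subr_eq0 eq_sym.
Qed.

(* If |lam| >= 1, the orbit Q J_n(lam)^m can only tend to zero when Q = 0:
   column by column, once the earlier columns of Q vanish, the entries of
   column j of Q J_n(lam)^m are those of Q scaled by lam^m. *)
Lemma jordan_block_orbit_null r n (lam : C) (Q : 'M[C]_(r, n)) :
  1 <= `|lam| -> mx_null (fun m => Q *m jordan_block n lam ^+ m) -> Q = 0.
Proof.
move=> lam_ge1 nQ; apply/matrixP => s j; rewrite [RHS]mxE.
suff col_eq0 c (j' : 'I_n) : (j' < c)%N -> Q s j' = 0 by apply: (col_eq0 j.+1).
elim: c j' => [|c IHc] {}j //; rewrite ltnS leq_eqVlt => /orP[/eqP j_eq | /IHc //].
have column_j m : (Q *m jordan_block n lam ^+ m) s j = Q s j * lam ^+ m.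
  rewrite mxE (bigD1 j) //= jordan_block_exp_diag big1 ?addr0 // => l.
  rewrite -val_eqE /= => lj; case: (ltnP l j) => [l_lt_j | j_le_l].
    by rewrite IHc ?mul0r // -j_eq.
  by rewrite (upper_trig_exp _ (@upper_trig_jordan_block n lam)) ?mulr0 //; lia.
apply: (mx_null_bounded_below (i := s) (j := j) nQ) => m.
by rewrite column_j normrM normrX ler_peMr // exprn_ege1.
Qed.

End JordanBlock.

Section JordanForm.
Variables (C : numClosedFieldType) (k : nat) (ns : 'I_k -> nat) (lam : 'I_k -> C).

(* Every block of 1 - J~ is either 1 or 1 - J_n(lam) with |lam| < 1. *)
Lemma unitmx_1_sub_jordan_tilde : (1%:M - jordan_tilde_mx ns lam) \in unitmx.
Proof.
rewrite /jordan_tilde_mx -[1%:M](@mxdiagZ _ _ ns) -mxdiagB; apply: unitmx_mxdiag => i.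
case: ifP => [_ | lam_small]; first by rewrite subr0 unitmx1.
by apply: unitmx_1_sub_jordan_block; apply: contraFneq lam_small => ->; rewrite normr1.
Qed.

(* If P J^m -> 0, then P vanishes on the blocks with |lam_i| >= 1, so
   those blocks may be replaced by 0: P J^m = P J~^m for every m. *)
Lemma jordan_orbit_tilde r (P : 'M[C]_(r, \sum_i ns i)) :
  mx_null (fun m => P *m jordan_mx ns lam ^+ m) ->
  forall m, P *m jordan_mx ns lam ^+ m = P *m jordan_tilde_mx ns lam ^+ m.
Proof.
move=> nP.
have blockwise (D : forall i, 'M[C]_(ns i)) m :
    P *m mxdiag D ^+ m = \mxrow_i (submxrow P i *m D i ^+ m).
  by rewrite mxdiag_exp mul_mxdiag_blocks.
have large_block_eq0 i : 1 <= `|lam i| -> submxrow P i = 0.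
  move=> lam_large; apply: (jordan_block_orbit_null lam_large).
  apply: mx_null_ext (mx_null_submxrow i nP) => m.
  by rewrite /jordan_mx blockwise mxrowK.
move=> m; rewrite /jordan_mx /jordan_tilde_mx !blockwise; apply/eq_mxrow => i.
by case: ifP => // /large_block_eq0 ->; rewrite !mul0mx.
Qed.

End JordanForm.

Theorem corollaryA1 (C : numClosedFieldType) (N r : nat)
  (M : 'M[C]_N) (N0 : 'M[C]_(r, N))
  (k : nat) (ns : 'I_k -> nat) (lam : 'I_k -> C)
  (Hns : forall i, (0 < ns i)%N) (E : (\sum_i ns i)%N = N)
  (S : 'M[C]_N) (HS : S \in unitmx)
  (HM : M = S *m castmx (E, E) (jordan_mx ns lam) *m invmx S) :
  let Mt := S *m castmx (E, E) (jordan_tilde_mx ns lam) *m invmx S in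
  (1%:M - Mt) \in unitmx /\
  (forall L : 'M[C]_(r, N), mx_series_to (fun m => N0 *m M ^+ m) L ->
     L = N0 *m invmx (1%:M - Mt)).
Proof.
subst N; rewrite !castmx_id in HM * => Mt.
have unit_Mt : (1%:M - Mt) \in unitmx.
  by rewrite conj_mx_1_sub // !unitmx_mul HS unitmx_inv HS unitmx_1_sub_jordan_tilde.
split=> // L sM; apply: geometric_series_limit unit_Mt _.
have M_exp m : M ^+ m = S *m jordan_mx ns lam ^+ m *m invmx S.
  by rewrite HM conj_mx_exp.
have null_orbit : mx_null (fun m => N0 *m S *m jordan_mx ns lam ^+ m).
  apply: mx_null_ext (mx_null_mulmxr S (series_terms_null sM)) => m.
  by rewrite M_exp !mulmxA mulmxKV.
apply: mx_series_to_ext sM => m.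
by rewrite M_exp /Mt conj_mx_exp // !mulmxA jordan_orbit_tilde.
Qed.
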